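(* Let $S=(P,L)$ be a finite $(2,t)$-generalized quadrangle and let $(R,\psi)$ be a faithful representation of $S$ with $\psi(x)=\langle r_x\rangle$. Let $a,b\in P$ be distinct non-collinear points. Set $A=\{r_ar_x: x\in P,\ x\neq a,\ x \text{ not collinear with } a\}$ and $B=\{r_br_x: x\in P,\ x\neq b,\ x\text{ not collinear with } b\}$. Then $|A\cap B|=t+2$.
   Context: A $(2,t)$-generalized quadrangle is a partial linear space in which every line has exactly $3$ points, every point lies on exactly $t+1$ lines, no point is collinear with all points, and for every point $x$ and line $\ell$ with $x\notin\ell$, $x$ is collinear with exactly one point of $\ell$. A representation $(R,\psi)$ of $S$ is a group $R$ with a map $\psi$ assigning to each point $x$ a subgroup $\psi(x)=\langle r_x\rangle$ of order $2$, such that $R$ is generated by the $r_x$ and, for every line $\{x,y,z\}$, $\{1,r_x,r_y,r_z\}$ is a Klein four subgroup. It is faithful if $\psi$ is injective. *)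

From mathcomp Require Import all_boot.
From Stdlib Require List.

Set Implicit Arguments.
Unset Strict Implicit.
Unset Printing Implicit Defensive.

(* Points form a finite type P; lines are given as a set L of subsets of P
   (a partial linear space is determined by its point-line incidence). *)

Definition collinear (P : finType) (L : {set {set P}}) (x y : P) : bool :=
  [exists l in L, (x \in l) && (y \in l)].

Definition is_GQ2t (P : finType) (L : {set {set P}}) (t : nat) : Prop :=
  [/\
      (forall l, l \in L -> #|l| = 3),
      (forall x : P, #|[set l in L | x \in l]| = t.+1),
      (forall (x y : P) (l1 l2 : {set P}), x != y -> l1 \in L -> l2 \in L ->
          x \in l1 -> y \in l1 -> x \in l2 -> y \in l2 -> l1 = l2),
      (forall x : P, exists y : P, ~~ collinear L x y) &
      (forall (x : P) (l : {set P}), l \in L -> x \notin l ->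
          #|[set y in l | collinear L x y]| = 1)].

Record is_group (G : Type) (mul : G -> G -> G) (one : G) (inv : G -> G) : Prop :=
  { grp_assoc : forall x y z, mul x (mul y z) = mul (mul x y) z;
    grp_mul1g : forall x, mul one x = x;
    grp_mulg1 : forall x, mul x one = x;
    grp_mulVg : forall x, mul (inv x) x = one;
    grp_mulgV : forall x, mul x (inv x) = one }.

(* {1, a, b, c} is a Klein four subgroup: four distinct elements, closed under
   multiplication, every element of exponent dividing 2 (a subgroup of order 4
   that is not cyclic, i.e. isomorphic to Z2 x Z2). *)
Definition klein4 (G : Type) (mul : G -> G -> G) (one : G) (a b c : G) : Prop :=
  let S := fun g => g = one \/ g = a \/ g = b \/ g = c in
  [/\ List.NoDup (one :: a :: b :: c :: nil),
      (forall g h, S g -> S h -> S (mul g h)) &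
      (forall g, S g -> mul g g = one)].

Definition is_representation (P : finType) (L : {set {set P}})
  (G : Type) (mul : G -> G -> G) (one : G) (r : P -> G) : Prop :=
  [/\
      (forall x, r x <> one /\ mul (r x) (r x) = one),
      (forall g : G, exists s : seq P, g = foldr (fun x acc => mul (r x) acc) one s) &
      (forall (l : {set P}) (x y z : P), l \in L -> l = [set x; y; z] ->
          klein4 mul one (r x) (r y) (r z))].

(* faithful: psi injective; since <r x> = <r y> iff r x = r y for involutions *)
Definition faithful_rep (P : finType) (G : Type) (r : P -> G) : Prop :=
  forall x y, r x = r y -> x = y.

Definition opp_set (P : finType) (L : {set {set P}}) (G : Type)
  (mul : G -> G -> G) (r : P -> G) (a : P) : G -> Prop :=
  fun g => exists x : P, [/\ x != a, ~~ collinear L a x & g = mul (r a) (r x)].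

Definition has_card (G : Type) (S : G -> Prop) (n : nat) : Prop :=
  exists s : seq G, [/\ List.NoDup s, (forall g, List.In g s <-> S g) & size s = n].

(** The generators commute: for collinear x, y this is the Klein relation
    r_z = r_x r_y on the line {x, y, z}; for opposite p, q, two points c, d of
    {p,q}^⊥ span a 3x3 grid, and computing r_w for its ninth point w along the
    two grid lines through w gives r_p r_q = r_q r_p. So R is an elementary
    abelian 2-group.

    If x ∈ b^⊥ is opposite a, either x = b or the line bx meets a^⊥ in a point c,
    and the third point y of the line ac gives r_a r_x = r_b r_y with y opposite b.
    Conversely, let r_a r_x = r_b r_y with x opposite a and b, and y opposite b.
    If a or x is collinear with y, the third point z of that line has
    r_z = r_b r_v with v opposite b; then z is opposite b (else v would be the
    third point of the line bz), so b is collinear with one of the other two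
    points of the line, which it is not. Otherwise a, b, x, y are pairwise
    opposite with r_a r_b = r_x r_y. Such a relation forces {a,b}^⊥ ⊆ {x,y}^⊥,
    and it transfers to the third points a', b', x', y' of the lines joining
    a, b, x, y to a point c of {a,b}^⊥; a second point of {a,b}^⊥ then produces
    a point of {a',b'}^⊥ outside x'^⊥, contradicting the inclusion.
    Hence A ∩ B = {r_a r_x : x ∈ b^⊥ \ a^⊥}, and b^⊥ \ a^⊥ consists of b and one
    point on each of the t + 1 lines through b. *)

From mathcomp Require Import all_boot.
From Stdlib Require List FinFun.

Set Implicit Arguments.
Unset Strict Implicit.
Unset Printing Implicit Defensive.

Section GroupLaws.
Variables (G : Type) (mul : G -> G -> G) (one : G) (inv : G -> G).
Hypothesis grpG : is_group mul one inv.

Lemma mulgI x : injective (mul x).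
Proof.
move=> y z E; rewrite -[y](grp_mul1g grpG) -[z](grp_mul1g grpG) -(grp_mulVg grpG x).
by rewrite -!(grp_assoc grpG) E.
Qed.

Lemma mulIg x : injective (mul^~ x).
Proof.
move=> y z E; rewrite -[y](grp_mulg1 grpG) -[z](grp_mulg1 grpG) -(grp_mulgV grpG x).
by rewrite !(grp_assoc grpG) E.
Qed.

End GroupLaws.

Section Quadrangle.
Variables (P : finType) (L : {set {set P}}) (t : nat).
Hypothesis gqL : is_GQ2t L t.
Local Notation coll := (collinear L).

Definition pencil (x : P) : {set {set P}} := [set l in L | x \in l].

Definition line3 (p q z : P) : Prop := exists2 l, l \in L & l = [set p; q; z].

Lemma card_pencil x : #|pencil x| = t.+1.
Proof. by case: gqL => _ card_pencil _ _ _; apply: card_pencil. Qed.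

Lemma mem_coll l x y : l \in L -> x \in l -> y \in l -> coll x y.
Proof. by move=> lL xl yl; apply/existsP; exists l; rewrite lL xl yl. Qed.

Lemma coll_refl x : coll x x.
Proof.
have /card_gt0P[l] : 0 < #|pencil x| by rewrite card_pencil.
by rewrite inE => /andP[lL xl]; apply: (mem_coll lL).
Qed.

Lemma coll_sym x y : coll x y = coll y x.
Proof.
by apply/existsP/existsP => -[l /and3P[lL xl yl]]; exists l; rewrite lL xl yl.
Qed.

Lemma opp_neq x y : ~~ coll x y -> x != y.
Proof. by apply: contraNneq => ->; apply: coll_refl. Qed.

Lemma coll_opp_neq x y z : coll x y -> ~~ coll z y -> x != z.
Proof. by move=> xy; apply: contraNneq => <-. Qed.

Lemma line3_swap12 p q z : line3 p q z -> line3 q p z.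
Proof. by case=> l lL El; exists l; rewrite // El [[set p; q]]setUC. Qed.

Lemma line3_swap23 p q z : line3 p q z -> line3 p z q.
Proof. by case=> l lL El; exists l; rewrite // El setUAC. Qed.

Lemma line3_rot p q z : line3 p q z -> line3 q z p.
Proof. by move/line3_swap12/line3_swap23. Qed.

Lemma line3_neq p q z : line3 p q z -> [/\ p != q, p != z & q != z].
Proof.
case=> l lL El; case: gqL => card3 _ _ _ _.
have /card_uniqP : #|[:: p; q; z]| = size [:: p; q; z].
  by rewrite -[RHS](card3 l lL) El; apply: eq_card => w; rewrite !inE orbA.
by rewrite /= !inE negb_or => /and3P[/andP[-> ->] ->].
Qed.

Lemma line3_coll12 p q z : line3 p q z -> coll p q.
Proof. by case=> l lL El; apply: (mem_coll lL); rewrite El !inE eqxx ?orbT. Qed.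

Lemma line3_coll13 p q z : line3 p q z -> coll p z.
Proof. by move/line3_swap23/line3_coll12. Qed.

Lemma line3_coll23 p q z : line3 p q z -> coll q z.
Proof. by move/line3_rot/line3_coll12. Qed.

Lemma line3_of_mem l b : l \in L -> b \in l ->
  exists u v, line3 b u v /\ l = [set b; u; v].
Proof.
move=> lL bl; case: gqL => card3 _ _ _ _.
have card2 : #|l :\ b| = 2 by have := cardsD1 b l; rewrite card3 // bl => -[].
have /card_gt1P[u [v [ul vl uv]]] : 1 < #|l :\ b| by rewrite card2.
have El : l = [set b; u; v].
  rewrite -(setD1K bl) -setUA; congr (_ :|: _); apply/eqP.
  by rewrite eq_sym eqEcard card2 cards2 uv andbT subUset !sub1set ul vl.
by exists u, v; split=> //; exists l.
Qed.

Lemma line3_of_coll p q : p != q -> coll p q -> exists z, line3 p q z.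
Proof.
move=> pq /existsP[l /and3P[lL pl ql]]; have [u [v [Hl El]]] := line3_of_mem lL pl.
move: ql; rewrite El !inE eq_sym (negbTE pq) /= => /orP[] /eqP ->.
- by exists v.
- by exists u; apply: line3_swap23.
Qed.

Lemma line_coll_uniq l w x y : l \in L -> w \notin l -> x \in l -> y \in l ->
  coll w x -> coll w y -> x = y.
Proof.
move=> lL wl xl yl wx wy; case: gqL => _ _ _ _ /(_ w l lL wl) /eqP/cards1P[c Ec].
have : x \in [set y in l | coll w y] by rewrite inE xl wx.
have : y \in [set y in l | coll w y] by rewrite inE yl wy.
by rewrite Ec !inE => /eqP -> /eqP ->.
Qed.

Lemma line_coll_exists l w : l \in L -> exists2 x, x \in l & coll w x.
Proof.
move=> lL; have [wl|wl] := boolP (w \in l); first by exists w; rewrite ?coll_refl.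
case: gqL => _ _ _ _ /(_ w l lL wl) /eqP/cards1P[x Ex].
by have := set11 x; rewrite -Ex inE => /andP[]; exists x.
Qed.

Lemma line3_coll2 p q z w : line3 p q z -> coll w p -> coll w q ->
  [|| w == p, w == q | w == z].
Proof.
move=> Hl wp wq; case: (Hl) => l lL El; have [pq _ _] := line3_neq Hl.
have [|wl] := boolP (w \in l); first by rewrite El !inE -orbA.
by move: pq; rewrite (line_coll_uniq lL wl _ _ wp wq) ?eqxx // El !inE eqxx ?orbT.
Qed.

Lemma line3_coll_third p q z w : line3 p q z -> ~~ coll w p -> ~~ coll w q -> coll w z.
Proof.
case=> l lL El wp wq; have [x] := line_coll_exists w lL.
by rewrite El !inE -orbA => /or3P[] /eqP ->; rewrite ?(negbTE wp) ?(negbTE wq).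
Qed.

Lemma line3_opp_third p q z w : line3 p q z -> coll w p -> w != p -> ~~ coll w q ->
  ~~ coll w z.
Proof.
move=> Hl wp wnp wq; apply: contraNN wq => wz.
have /or3P[] := line3_coll2 (line3_swap23 Hl) wp wz => /eqP Ew.
- by rewrite Ew eqxx in wnp.
- by rewrite Ew coll_sym (line3_coll23 Hl).
- by rewrite Ew coll_refl.
Qed.

Lemma line3_opp_thirds c p p' q q' : line3 c p p' -> line3 c q q' ->
  ~~ coll p q -> ~~ coll p' q'.
Proof.
move=> Hp Hq pq; have [_ cp' _] := line3_neq Hp; have [cq _ _] := line3_neq Hq.
have qp' : ~~ coll q p'.
  by apply: (line3_opp_third Hp); rewrite 1?coll_sym ?(line3_coll12 Hq) // eq_sym.
by apply: (line3_opp_third Hq); rewrite 1?coll_sym ?(line3_coll13 Hp) // eq_sym.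
Qed.

Lemma perp_opp a b c d : ~~ coll a b -> c != d ->
  coll c a -> coll c b -> coll d a -> coll d b -> ~~ coll c d.
Proof.
move=> ab cd ca cb da db; apply: contraNN ab => /(line3_of_coll cd)[e He].
rewrite ![coll _ a]coll_sym in ca da; case/or3P: (line3_coll2 He ca da) => /eqP -> //.
rewrite ![coll _ b]coll_sym in cb db; case/or3P: (line3_coll2 He cb db) => /eqP ->.
- by rewrite coll_sym (line3_coll13 He).
- by rewrite coll_sym (line3_coll23 He).
- exact: coll_refl.
Qed.

Lemma pencil_gt1 x : 1 < #|pencil x|.
Proof.
have /card_gt0P[l] : 0 < #|pencil x| by rewrite card_pencil.
rewrite inE => /andP[lL xl]; case: gqL => _ _ _ /(_ x)[y xy] _.
have yl : y \notin l by apply: contraNN xy => yl; apply: (mem_coll lL).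
have [c cl yc] := line_coll_exists y lL.
have /existsP[m /and3P[mL ym cm]] := yc.
rewrite card_pencil -(card_pencil c); apply/card_gt1P; exists m, l.
by rewrite !inE mL cm lL cl; split=> //; apply: contraNneq yl => <-.
Qed.

Lemma two_perp p q : ~~ coll p q ->
  exists c d, [/\ c != d, coll c p, coll c q, coll d p & coll d q].
Proof.
move=> pq; have /card_gt1P[l1 [l2 []]] := pencil_gt1 p.
rewrite !inE => /andP[l1L pl1] /andP[l2L pl2] l12.
have [c cl1 qc] := line_coll_exists q l1L.
have [d dl2 qd] := line_coll_exists q l2L.
have cp : coll c p := mem_coll l1L cl1 pl1.
have dp : coll d p := mem_coll l2L dl2 pl2.
exists c, d; split; rewrite ?cp ?dp 1?coll_sym //.
apply: contraNneq l12 => Ecd; rewrite -{}Ecd in dl2; case: gqL => _ _ linear _ _.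
by apply/eqP/(linear p c l1 l2); rewrite // eq_sym (coll_opp_neq _ pq) // coll_sym.
Qed.

Lemma grid_diag p q c d cp dq : ~~ coll p q -> ~~ coll c d ->
  line3 c p cp -> line3 d q dq -> coll c q -> coll d p ->
  [/\ ~~ coll cp q, ~~ coll cp d & coll cp dq].
Proof.
move=> pq cd Hc Hd cq dp.
have qc : q != c by rewrite eq_sym (coll_opp_neq (line3_coll12 Hc)) // coll_sym.
have dnp : d != p by rewrite (coll_opp_neq (line3_coll12 Hd)).
have cpq : ~~ coll cp q.
  by rewrite coll_sym (line3_opp_third Hc) // coll_sym.
have cpd : ~~ coll cp d.
  by rewrite coll_sym (line3_opp_third (line3_swap12 Hc)) // coll_sym.
by split=> //; apply: (line3_coll_third Hd).
Qed.

Lemma grid_ninth p q c d cp cq dq w : ~~ coll p q -> ~~ coll c d ->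
  line3 c p cp -> line3 c q cq -> line3 d q dq -> coll d p -> line3 cp dq w ->
  ~~ coll w c /\ coll w cq.
Proof.
move=> pq cd Hcp Hcq Hdq dp Hw; have cq_coll := line3_coll12 Hcq.
have qp : ~~ coll q p by rewrite coll_sym.
have dc : ~~ coll d c by rewrite coll_sym.
have [cpq _ _] := grid_diag pq cd Hcp Hdq cq_coll dp.
have [_ dqc _] := grid_diag qp dc Hdq Hcp dp cq_coll.
have [_ ccp _] := line3_neq Hcp; have [_ qdq _] := line3_neq (line3_swap12 Hdq).
have wc : ~~ coll w c.
  by rewrite coll_sym (line3_opp_third Hw) ?(line3_coll13 Hcp) // coll_sym.
have wq : ~~ coll w q.
  by rewrite coll_sym (line3_opp_third (line3_swap12 Hw)) ?(line3_coll23 Hdq) // coll_sym.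
by split=> //; apply: (line3_coll_third Hcq).
Qed.

Lemma grid p q c d cp cq dp dq : ~~ coll p q -> ~~ coll c d ->
  line3 c p cp -> line3 c q cq -> line3 d p dp -> line3 d q dq ->
  exists w, line3 cp dq w /\ line3 cq dp w.
Proof.
move=> pq cd Hcp Hcq Hdp Hdq.
have qp : ~~ coll q p by rewrite coll_sym.
have dc : ~~ coll d c by rewrite coll_sym.
have [_ cpd cpdq] := grid_diag pq cd Hcp Hdq (line3_coll12 Hcq) (line3_coll12 Hdp).
have [_ cqd cqdp] := grid_diag qp cd Hcq Hdp (line3_coll12 Hcp) (line3_coll12 Hdq).
have [w Hw] : exists w, line3 cp dq w.
  by apply: line3_of_coll cpdq; rewrite eq_sym (coll_opp_neq _ cpd) // coll_sym
     (line3_coll13 Hdq).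
have [w' Hw'] : exists w', line3 cq dp w'.
  by apply: line3_of_coll cqdp; rewrite eq_sym (coll_opp_neq _ cqd) // coll_sym
     (line3_coll13 Hdp).
have [wc wcq] := grid_ninth pq cd Hcp Hcq Hdq (line3_coll12 Hdp) Hw.
have [wd wdp] := grid_ninth qp dc Hdq Hdp Hcp (line3_coll12 Hcq) (line3_swap12 Hw).
exists w; split=> //.
case/or3P: (line3_coll2 Hw' wcq wdp) => /eqP Ew; last by rewrite Ew.
- by move: wc; rewrite Ew coll_sym (line3_coll13 Hcq).
- by move: wd; rewrite Ew coll_sym (line3_coll13 Hdp).
Qed.

Section PerpCount.
Variables a b : P.
Hypothesis ab : ~~ coll a b.

Lemma line3_opp_coll u v : line3 b u v -> (~~ coll a u) = coll a v.
Proof.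
move=> Hl; apply/idP/idP => [au|av]; first exact: line3_coll_third Hl ab au.
apply/negP => au; case/or3P: (line3_coll2 (line3_rot Hl) au av) => /eqP Ea.
- by move: ab; rewrite Ea coll_sym (line3_coll12 Hl).
- by move: ab; rewrite Ea coll_sym (line3_coll13 Hl).
- by move: ab; rewrite Ea coll_refl.
Qed.

Definition far_point (l : {set P}) : P :=
  odflt b [pick x in l | (x != b) && ~~ coll a x].

Lemma far_pointP l : l \in pencil b ->
  [/\ far_point l \in l, far_point l != b & ~~ coll a (far_point l)].
Proof.
rewrite inE => /andP[lL bl]; rewrite /far_point; case: pickP => [x /and3P[] //|none].
have [u [v [Hl El]]] := line3_of_mem lL bl; have [bu bv _] := line3_neq Hl.
have := none u; have := none v.
rewrite El !inE !eqxx !orbT /= ![_ == b]eq_sym bu bv /= => /negbFE av /negbFE au.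
by move: au; rewrite -(negbK (coll a u)) (line3_opp_coll Hl) av.
Qed.

Lemma far_point_uniq l x : l \in pencil b -> x \in l -> x != b -> ~~ coll a x ->
  far_point l = x.
Proof.
move=> lb xl xb ax; have [yl yb ay] := far_pointP lb.
move: lb; rewrite inE => /andP[lL bl]; have [u [v [Hl El]]] := line3_of_mem lL bl.
have uv_opp : ~~ coll a u -> ~~ coll a v -> False.
  by move=> au; rewrite -(line3_opp_coll Hl) au.
move: (far_point l) yl yb ay => y yl yb ay.
move: xl yl; rewrite El !inE (negbTE xb) (negbTE yb) /=.
by case/orP=> /eqP Ex /orP[] /eqP Ey; rewrite Ex Ey //; exfalso; apply: uv_opp;
  rewrite -?Ex -?Ey.
Qed.

Lemma card_coll_opp : #|[set x | coll b x && ~~ coll a x]| = t + 2.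
Proof.
have -> : [set x | coll b x && ~~ coll a x] = b |: far_point @: pencil b.
  apply/setP => x; rewrite !inE; have [->|xb] /= := eqVneq x b; first by rewrite coll_refl.
  apply/andP/imsetP => [[/existsP[l /and3P[lL bl xl]] ax] | [l lb ->]].
    have lb : l \in pencil b by rewrite inE lL bl.
    by exists l; rewrite // (far_point_uniq lb xl).
  have [fl _ fa] := far_pointP lb; move: lb; rewrite inE => /andP[lL bl].
  by rewrite (mem_coll lL bl fl).
have bNf : b \notin far_point @: pencil b.
  by apply/imsetP => -[l lb Eb]; have [_ /eqP[]] := far_pointP lb.
rewrite cardsU1 bNf card_in_imset ?card_pencil ?addn2 // => l1 l2 l1b l2b E.
have [f1 fb _] := far_pointP l1b; have [f2 _ _] := far_pointP l2b.
move: l1b l2b; rewrite !inE => /andP[l1L bl1] /andP[l2L bl2].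
by case: gqL => _ _ linear _ _; apply: (linear _ b _ _ fb); rewrite // E.
Qed.

End PerpCount.

Section Representation.
Variables (G : Type) (mul : G -> G -> G) (one : G) (inv : G -> G) (r : P -> G).
Hypotheses (grpG : is_group mul one inv) (reprG : is_representation L mul one r).
Hypothesis faithful : faithful_rep r.
Local Infix "**" := mul (at level 40, left associativity).
Local Notation mulgA := (grp_assoc grpG).
Local Notation mul1g := (grp_mul1g grpG).
Local Notation mulg1 := (grp_mulg1 grpG).
Local Notation mulgI := (mulgI grpG).
Local Notation mulIg := (mulIg grpG).

Lemma mulrr x : r x ** r x = one.
Proof. by case: reprG => /(_ x)[]. Qed.

Lemma r_neq1 x : r x <> one.
Proof. by case: reprG => /(_ x)[]. Qed.

Lemma line3_mul p q z : line3 p q z -> r z = r p ** r q.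
Proof.
move=> Hl; case: (Hl) => l lL El; have [pq _ _] := line3_neq Hl.
case: reprG => _ _ /(_ l p q z lL El)[_ closed _].
have [E|[E|[E|->//]]] := closed (r p) (r q) (or_intror (or_introl erefl))
  (or_intror (or_intror (or_introl erefl))).
- by move: pq; rewrite (faithful (mulgI (etrans E (esym (mulrr p))))) eqxx.
- by case: (@r_neq1 q); apply: (@mulgI (r p)); rewrite mulg1.
- by case: (@r_neq1 p); apply: (@mulIg (r q)); rewrite mul1g.
Qed.

Lemma line3_mulC p q z : line3 p q z -> r p ** r q = r q ** r p.
Proof. by move=> Hl; rewrite -(line3_mul Hl) -(line3_mul (line3_swap12 Hl)). Qed.

Lemma opp_mulC p q : ~~ coll p q -> r p ** r q = r q ** r p.
Proof.
move=> pq; have qp : ~~ coll q p by rewrite coll_sym.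
have [c [d [cd cp cq dp dq]]] := two_perp pq.
have [pc Hpc] := line3_of_coll (coll_opp_neq cq pq) cp.
have [qc Hqc] := line3_of_coll (coll_opp_neq cp qp) cq.
have [pd Hpd] := line3_of_coll (coll_opp_neq dq pq) dp.
have [qd Hqd] := line3_of_coll (coll_opp_neq dp qp) dq.
have [w [Hw Hw']] := grid pq (perp_opp pq cd cp cq dp dq) Hpc Hqc Hpd Hqd.
have := line3_mul Hw; rewrite (line3_mul Hw') (line3_mul Hpc) (line3_mul Hqd).
rewrite (line3_mul Hqc) (line3_mul Hpd) -!mulgA => /mulgI.
by rewrite !mulgA -(line3_mulC Hqd) -(line3_mulC Hpd) -!mulgA => /mulgI ->.
Qed.

Lemma mulrC p q : r p ** r q = r q ** r p.
Proof.
have [->//|pq] := eqVneq p q; have [pq'|] := boolP (coll p q); last exact: opp_mulC.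
by have [z Hz] := line3_of_coll pq pq'; apply: line3_mulC Hz.
Qed.

Lemma mulgC g h : g ** h = h ** g.
Proof.
have word k : exists s : seq P, k = foldr (fun x acc => r x ** acc) one s.
  by case: reprG => _ gen _; apply: gen.
have central x k : k ** r x = r x ** k.
  have [s ->] := word k; elim: s => [|y s IH] /=; first by rewrite mul1g mulg1.
  by rewrite -mulgA IH !mulgA mulrC.
have [s ->] := word h; elim: s => [|y s IH] /=; first by rewrite mul1g mulg1.
by rewrite mulgA central -mulgA IH mulgA.
Qed.

Lemma mul_eq_swap p q u v : r p ** r q = r u ** r v -> r p ** r u = r q ** r v.
Proof.
move=> E; apply: (@mulgI (r q)).
by rewrite mulgA (mulgC (r q)) E (mulgC _ (r u)) !mulgA !mulrr !mul1g.
Qed.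

Lemma line3_thirds_mul c p p' q q' : line3 c p p' -> line3 c q q' ->
  r p' ** r q' = r p ** r q.
Proof.
move=> Hp Hq; rewrite (line3_mul (line3_swap12 Hp)) (line3_mul Hq).
by rewrite mulgA -(mulgA (r p)) mulrr mulg1.
Qed.

Lemma line3_mul_coll p q z u v : line3 p q z -> r z = r u ** r v -> ~~ coll u v ->
  coll u p || coll u q.
Proof.
move=> Hl Ez uv; have zu : ~~ coll z u.
  apply/negP => zu; have zNu : z != u.
    by apply/eqP=> Ezu; apply: (@r_neq1 v); apply: (@mulgI (r u)); rewrite mulg1 -Ez Ezu.
  have [w Hw] := line3_of_coll zNu zu.
  have /faithful Ew : r w = r v.
    by rewrite (line3_mul Hw) Ez (mulgC (r u)) -mulgA mulrr mulg1.
  by rewrite -Ew (line3_coll23 Hw) in uv.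
apply/negPn/negP => /norP[up uq].
by rewrite coll_sym (line3_coll_third Hl up uq) in zu.
Qed.

Lemma opp4_perp_coll p q u v c :
  ~~ coll p q -> ~~ coll p u -> ~~ coll p v -> ~~ coll q u -> ~~ coll q v ->
  ~~ coll u v -> r p ** r q = r u ** r v -> coll c p -> coll c q -> coll c u.
Proof.
move=> pq pu pv qu qv uv E cp cq; apply: contraT => cu.
have [qp up uq uc] : [/\ ~~ coll q p, ~~ coll u p, ~~ coll u q & ~~ coll u c].
  by split; rewrite coll_sym.
have [p' Hp] := line3_of_coll (coll_opp_neq cq pq) cp.
have [q' Hq] := line3_of_coll (coll_opp_neq cp qp) cq.
have up' : coll u p' := line3_coll_third Hp uc up.
have uq' : coll u q' := line3_coll_third Hq uc uq.
have p'q' : ~~ coll p' q' := line3_opp_thirds Hp Hq pq.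
have [z Hz] : exists z, line3 u p' z.
  by apply: line3_of_coll up'; rewrite eq_sym (coll_opp_neq _ up) // coll_sym
     (line3_coll23 Hp).
have Ez : r z = r v ** r q'.
  rewrite (line3_mul Hz) (mulgC (r u)).
  by rewrite (mul_eq_swap (etrans (line3_thirds_mul Hp Hq) E)) mulgC.
have [vp vq] : ~~ coll v p /\ ~~ coll v q by split; rewrite coll_sym.
have [cv|vc] := boolP (coll c v).
  have vNc : v != c by rewrite eq_sym (coll_opp_neq cp vp).
  have vp' : ~~ coll v p' by apply: (line3_opp_third Hp); rewrite // coll_sym.
  have vq' : ~~ coll v q' by apply: (line3_opp_third Hq); rewrite // coll_sym.
  by have := line3_mul_coll Hz Ez vq'; rewrite coll_sym (negbTE uv) (negbTE vp').
rewrite coll_sym in vc.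
have [w Hw] : exists w, line3 q' v w.
  apply: line3_of_coll; last by rewrite coll_sym (line3_coll_third Hq vc vq).
  by rewrite (coll_opp_neq _ vq) // coll_sym (line3_coll23 Hq).
have /faithful Ewz : r w = r z by rewrite Ez (line3_mul Hw) mulgC.
rewrite {}Ewz in Hw; rewrite coll_sym in uq'.
case/or3P: (line3_coll2 (line3_swap23 Hz) uq' (line3_coll13 Hw)) => /eqP Eq'.
- by move: cu; rewrite -Eq' (line3_coll13 Hq).
- by move: p'q'; rewrite Eq' (line3_coll23 Hz).
- by move: p'q'; rewrite Eq' coll_refl.
Qed.

Lemma opp4_mul_neq p q u v :
  ~~ coll p q -> ~~ coll p u -> ~~ coll p v -> ~~ coll q u -> ~~ coll q v ->
  ~~ coll u v -> r p ** r q <> r u ** r v.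
Proof.
move=> pq pu pv qu qv uv E.
have vu : ~~ coll v u by rewrite coll_sym.
have perp c : coll c p -> coll c q -> coll c u && coll c v.
  move=> cp cq; rewrite (opp4_perp_coll pq pu pv qu qv uv E cp cq).
  by rewrite (opp4_perp_coll pq pv pu qv qu vu _ cp cq) // E mulgC.
have [c [d [cd cp cq dp dq]]] := two_perp pq.
have /andP[cu cv] := perp c cp cq; have /andP[du _] := perp d dp dq.
have cNd := perp_opp pq cd cp cq dp dq.
have [up uq vp qp] : [/\ ~~ coll u p, ~~ coll u q, ~~ coll v p & ~~ coll q p].
  by split; rewrite coll_sym.
have [p' Hp] := line3_of_coll (coll_opp_neq cq pq) cp.
have [q' Hq] := line3_of_coll (coll_opp_neq cp qp) cq.
have [u' Hu] := line3_of_coll (coll_opp_neq cp up) cu.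
have [v' Hv] := line3_of_coll (coll_opp_neq cp vp) cv.
have [ud Hud] : exists ud, line3 u d ud.
  by apply: line3_of_coll; rewrite 1?coll_sym // eq_sym (coll_opp_neq dp up).
(* The relation moves to the third points of the lines through c, and the third
   point of the line ud lies in {p', q'}^⊥ but not in u'^⊥. *)
have E' : r p' ** r q' = r u' ** r v'.
  by rewrite (line3_thirds_mul Hp Hq) (line3_thirds_mul Hu Hv).
have udNu' : ~~ coll ud u' by rewrite coll_sym (line3_opp_thirds (line3_swap12 Hu) Hud).
have dc : ~~ coll d c by rewrite coll_sym.
have uNc : u != c by rewrite (coll_opp_neq _ cNd) // coll_sym.
have ud_coll x x' : line3 c x x' -> ~~ coll u x -> coll d x -> coll ud x'.
  move=> Hx ux dx; have xNd : x != d by rewrite (coll_opp_neq _ dc) // coll_sym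
    (line3_coll12 Hx).
  rewrite coll_sym (line3_coll_third Hud) // coll_sym.
    by rewrite (line3_opp_third Hx) // coll_sym.
  by rewrite (line3_opp_third (line3_swap12 Hx)) // eq_sym.
have := opp4_perp_coll (line3_opp_thirds Hp Hq pq) (line3_opp_thirds Hp Hu pu)
  (line3_opp_thirds Hp Hv pv) (line3_opp_thirds Hq Hu qu) (line3_opp_thirds Hq Hv qv)
  (line3_opp_thirds Hu Hv uv) E' (ud_coll _ _ Hp up dp) (ud_coll _ _ Hq uq dq).
by rewrite (negbTE udNu').
Qed.

Lemma mul_eq_coll a b x y : ~~ coll a b -> ~~ coll a x -> ~~ coll b y ->
  r a ** r x = r b ** r y -> coll b x.
Proof.
move=> ab ax by_ E; apply: contraT => bx.
have ba : ~~ coll b a by rewrite coll_sym.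
have aNy : a != y.
  apply: contraNneq bx => Ey; rewrite -Ey (mulgC (r b)) in E.
  by rewrite (faithful (mulgI E)) coll_refl.
have xNy : x != y.
  by apply: contraNneq ab => Ey; rewrite -Ey in E; rewrite (faithful (mulIg E)) coll_refl.
have [ay|ay] := boolP (coll a y).
  have [z Hz] := line3_of_coll aNy ay.
  have Ez : r z = r b ** r x.
    by rewrite (line3_mul Hz) (mul_eq_swap (etrans E (mulgC _ _))) mulgC.
  by have := line3_mul_coll Hz Ez bx; rewrite (negbTE ba) (negbTE by_).
have Eab := mul_eq_swap E.
have [xy|xy] := boolP (coll x y).
  have [z Hz] := line3_of_coll xNy xy.
  have Ez : r z = r b ** r a by rewrite (line3_mul Hz) -Eab mulgC.
  by have := line3_mul_coll Hz Ez ba; rewrite (negbTE bx) (negbTE by_).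
by case: (opp4_mul_neq ab ax ay bx by_ xy Eab).
Qed.

Lemma coll_mul_eq a b x : ~~ coll a b -> coll b x -> ~~ coll a x ->
  exists2 y, ~~ coll b y & r a ** r x = r b ** r y.
Proof.
move=> ab bx ax; have [<-|bNx] := eqVneq b x.
  by exists a; rewrite 1?coll_sym // mulgC.
have [c Hc] := line3_of_coll bNx bx; have [_ bNc _] := line3_neq Hc.
have ac := line3_coll_third Hc ab ax.
have [y Hy] : exists y, line3 a c y.
  by apply: line3_of_coll ac; rewrite eq_sym (coll_opp_neq _ ab) // coll_sym
     (line3_coll13 Hc).
exists y.
  by rewrite (line3_opp_third (line3_swap12 Hy)) ?(line3_coll13 Hc) // coll_sym.
by rewrite (line3_mul (line3_swap23 Hc)) (line3_mul Hy) !mulgA (mulgC (r a)).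
Qed.

End Representation.

End Quadrangle.

Lemma In_mem (T : eqType) (x : T) (s : seq T) : List.In x s <-> x \in s.
Proof.
elim: s => [|y s IH] //=; rewrite inE.
by split=> [[->|/IH->]|/orP[/eqP->|/IH]]; rewrite ?eqxx ?orbT; auto.
Qed.

Lemma uniq_NoDup (T : eqType) (s : seq T) : uniq s -> List.NoDup s.
Proof.
elim: s => [|x s IH] /=; first by constructor.
by case/andP=> xs us; constructor; [rewrite In_mem; apply/negP | apply: IH].
Qed.

Lemma has_card_image (T : finType) (G : Type) (f : T -> G) (A : {set T})
    (S : G -> Prop) :
  injective f -> (forall g, S g <-> exists2 x, x \in A & g = f x) -> has_card S #|A|.
Proof.
move=> injf SE; exists (map f (enum A)); split; last by rewrite size_map cardE.
  exact/FinFun.Injective_map_NoDup/uniq_NoDup/enum_uniq.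
move=> g; rewrite SE List.in_map_iff; split=> [[x [<-]]|[x xA ->]].
  by rewrite In_mem mem_enum; exists x.
by exists x; rewrite In_mem mem_enum.
Qed.

Theorem lemma3p8 (P : finType) (L : {set {set P}}) (t : nat)
  (G : Type) (mul : G -> G -> G) (one : G) (inv : G -> G) (r : P -> G)
  (a b : P) :
  is_GQ2t L t ->
  is_group mul one inv ->
  is_representation L mul one r ->
  faithful_rep r ->
  a != b -> ~~ collinear L a b ->
  has_card (fun g => opp_set L mul r a g /\ opp_set L mul r b g) (t + 2).
Proof.
move=> gqL grpG reprG faithful _ ab.
rewrite -(card_coll_opp gqL ab); apply: (has_card_image (f := mul (r a) \o r)).
  by move=> x y /(mulgI grpG) /faithful.
move=> g; split=> [[[x [_ ax ->]] [y [_ by_ Eg]]] | [x]].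
  exists x => //; rewrite inE ax andbT.
  exact: (mul_eq_coll gqL grpG reprG faithful ab ax by_ Eg).
rewrite inE => /andP[bx ax] ->; have [y by_ E] := coll_mul_eq gqL grpG reprG faithful ab bx ax.
by split; [exists x | exists y]; split; rewrite // eq_sym (opp_neq gqL).
Qed.
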